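(* Let $n\ge 4$ and let $S\subseteq\mathbb{Z}_n$ with $0\notin S$, $S=-S$, such that $\mathrm{Cay}(\mathbb{Z}_n,S)$ is connected, and let $k=|S|$. If $k$ divides $n$ and $s\not\equiv s'\pmod k$ for all distinct $s,s'\in S$, then $\mathrm{Cay}(\mathbb{Z}_n,S)$ admits a total perfect code.
   Context: Elements of $\mathbb{Z}_n$ are identified with integers in $\{0,1,\dots,n-1\}$. The circulant graph $\mathrm{Cay}(\mathbb{Z}_n,S)$ has vertex set $\mathbb{Z}_n$ with $u,v$ adjacent iff $v-u\in S$; its degree is $|S|$. A total perfect code in a graph $\Gamma=(V,E)$ is a subset $C\subseteq V$ such that every vertex of $V$ has exactly one neighbour in $C$. *)

From mathcomp Require Import all_boot all_order all_algebra.
Set Implicit Arguments. Unset Strict Implicit. Unset Printing Implicit Defensive.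
Import GRing.Theory.
Local Open Scope ring_scope.

Definition cay_adj (n : nat) (S : {set 'Z_n}) : rel 'Z_n :=
  fun u v => (v - u) \in S.

Definition cay_connected (n : nat) (S : {set 'Z_n}) : Prop :=
  forall u v : 'Z_n, connect (cay_adj S) u v.

Definition total_perfect_code (n : nat) (S : {set 'Z_n}) (C : {set 'Z_n}) : Prop :=
  forall v : 'Z_n, #|[set c in C | cay_adj S v c]| = 1%N.

From mathcomp Require Import all_boot all_order all_algebra.
Import GRing.Theory.
Local Open Scope ring_scope.

(* When k divides n, reduction mod k is an additive map from Z_n onto Z_k,
   and the residue condition says it maps S bijectively onto Z_k.  Hence for
   every vertex v there is exactly one s in S with v + s divisible by k, so the
   multiples of k form a total perfect code. *)

Section ResidueModDivisor.

Local Set Implicit Arguments.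
Local Unset Strict Implicit.

Variables (n k : nat).
Hypotheses (n_gt1 : (1 < n)%N) (k_dvd_n : (k %| n)%N) (k_gt0 : (0 < k)%N).

Definition residue (x : 'Z_n) : 'I_k := Ordinal (ltn_pmod x k_gt0).

Lemma modn_ZpD (a b : 'Z_n) : ((a + b)%R %% k = (a + b) %% k)%N.
Proof.
have k_dvd_n' : (k %| (Zp_trunc n).+2)%N by rewrite (Zp_cast n_gt1).
by rewrite /= modn_dvdm.
Qed.

Lemma eq_residue_addl (v a b : 'Z_n) :
  (residue (v + a) == residue (v + b)) = (residue a == residue b).
Proof. by rewrite -val_eqE /= !modn_ZpD eqn_modDl. Qed.

Variable S : {set 'Z_n}.
Hypotheses (residue_inj : {in S &, injective residue}) (card_S : #|S| = k).

Lemma residue_onto (r : 'I_k) : exists2 s, s \in S & residue s = r.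
Proof.
have imS : residue @: S = [set: 'I_k].
  apply/eqP; rewrite eqEcard subsetT cardsT card_ord.
  by rewrite (card_in_imset residue_inj) card_S leqnn.
have /imsetP[s Ss ->] : r \in residue @: S by rewrite imS inE.
by exists s.
Qed.

Lemma total_perfect_code_residue_kernel :
  total_perfect_code S [set c | residue c == residue 0].
Proof.
move=> v; have [s Ss residue_s] := residue_onto (residue (- v)).
suff -> : [set c in [set c | residue c == residue 0] | cay_adj S v c]
          = [set v + s].
  by rewrite cards1.
apply/setP => c; rewrite !inE /cay_adj -(subrr v).
apply/andP/eqP => [[] | ->].
  rewrite -{1}(subrKC v c) eq_residue_addl -residue_s => /eqP residue_cv Scv.
  by rewrite -(residue_inj Scv Ss residue_cv) subrKC.
by rewrite eq_residue_addl residue_s addrC addKr.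
Qed.

End ResidueModDivisor.

Theorem lemma2p5 (n : nat) (S : {set 'Z_n}) :
  (4 <= n)%N ->
  0 \notin S ->
  (forall s : 'Z_n, s \in S -> - s \in S) ->
  cay_connected S ->
  (#|S| %| n)%N ->
  (forall s s' : 'Z_n, s \in S -> s' \in S -> s != s' ->
     (nat_of_ord s %% #|S| != nat_of_ord s' %% #|S|)%N) ->
  exists C : {set 'Z_n}, total_perfect_code S C.
Proof.
move=> n_ge4 _ _ _ k_dvd_n residue_neq.
have n_gt1 : (1 < n)%N by apply: leq_trans n_ge4.
have k_gt0 : (0 < #|S|)%N by apply: dvdn_gt0 k_dvd_n; apply: ltnW.
have residue_inj : {in S &, injective (residue k_gt0)}.
  move=> s s' Ss Ss' /(congr1 val) /= eq_mod.
  by apply/eqP; apply: contraTT (residue_neq _ _ Ss Ss') _; rewrite eq_mod.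
eexists; exact: (total_perfect_code_residue_kernel n_gt1 k_dvd_n residue_inj).
Qed.
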